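(* Let $\alpha,\beta,\gamma$ be partitions with $\alpha_1\le 2$ and let $\Gamma$ be an LR-tableau of type $(\alpha,\beta,\gamma)$; let $x$ be the number of entries $1$ in $\Gamma$. Assume: (1) the number of entries $2$ in $\Gamma$ equals $x$ or $x-1$; (2) every row of $\Gamma$ contains at most one (non-empty) box; (3) if row $j$ contains an entry $2$ and row $i$ contains an entry $1$, then $j>i$. Then in the poset $(\mathcal D_\Gamma,\le_{\rm arc})$ all saturated chains have the same length.
   Context: For a partition $\lambda$, $\lambda'$ is its conjugate; the diagram of $\lambda$ is drawn with $\lambda'_i$ boxes in row $i$, so the $i$-th row of $\beta\setminus\gamma$ consists of the boxes in columns $\gamma'_i+1,\dots,\beta'_i$. With $\alpha_1\le2$, $\alpha'=(\alpha'_1,\alpha'_2)$. An LR-tableau of type $(\alpha,\beta,\gamma)$ is a filling of $\beta\setminus\gamma$ with $\alpha'_1$ entries $1$ and $\alpha'_2$ entries $2$, weakly increasing along rows, strictly increasing down columns, such that for each $c\ge0$ the number of entries $1$ in columns to the right of column $c$ is at least the number of entries $2$ there. Place positive integers on a line in decreasing order from left to right. An arc is a pair $(m,n)$, $m>n$ positive integers (source $m$, target $n$); a pole at $n$ is regarded as an arc $(\infty,n)$. An arc diagram of type $(\alpha,\beta,\gamma)$ is a finite multiset of $\alpha'_2$ arcs and $\alpha'_1-\alpha'_2$ poles with, for each $i$, exactly $\beta'_i-\gamma'_i$ members having source or target $i$. It has LR type $\Gamma$ if for each $i$ the number of arcs with source $i$ equals the number of entries $2$ in row $i$ of $\Gamma$;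 $\mathcal D_\Gamma$ is the set of such diagrams. Moves: for $a>b>c>d$, (A) replaces arcs $(a,c),(b,d)$ by $(a,d),(b,c)$; (C) replaces them by $(a,b),(c,d)$; for $a>b>c$, (B) replaces arc $(a,c)$ and pole $(\infty,b)$ by arc $(a,b)$ and pole $(\infty,c)$; (D) replaces them by arc $(b,c)$ and pole $(\infty,a)$. $\Delta\le_{\rm arc}\Delta'$ iff $\Delta$ is obtained from $\Delta'$ by a finite (possibly empty) sequence of moves. A chain is saturated if it has no refinement, i.e. is not properly contained in another chain of the poset. *)

From mathcomp Require Import all_boot.
From mathcomp Require Import finmap multiset.
From Stdlib Require Import Relation_Operators.

Set Implicit Arguments.
Unset Strict Implicit.
Unset Printing Implicit Defensive.

Local Open Scope mset_scope.
Local Open Scope nat_scope.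

Definition is_partition (l : seq nat) : bool :=
  sorted (fun a b => b <= a) l && all (fun p => 0 < p) l.

(* lambda_c  (1-based; 0 beyond the length) *)
Definition part (l : seq nat) (c : nat) : nat := nth 0 l c.-1.

(* conjugate partition: lambda'_i = #{ c | lambda_c >= i } (meaningful for i >= 1) *)
Definition conjpart (l : seq nat) (i : nat) : nat := count (fun p => i <= p) l.

(* Row i (i >= 1) of beta \ gamma consists of the boxes in columns
   gamma'_i + 1, ..., beta'_i. *)
Definition inskew (beta gamma : seq nat) (i c : nat) : bool :=
  (0 < i) && (conjpart gamma i < c <= conjpart beta i).

(* a bound on all row and column indices of boxes of beta *)
Definition bnd (beta : seq nat) : nat := (sumn beta).+1.

(* A filling of beta \ gamma is a function T : row -> column -> entry;
   only its values on boxes of beta \ gamma matter. *)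

Definition row_count (beta gamma : seq nat) (T : nat -> nat -> nat) (k i : nat) : nat :=
  \sum_(c < bnd beta) (inskew beta gamma i c && (T i c == k)).

Definition tab_count (beta gamma : seq nat) (T : nat -> nat -> nat) (k : nat) : nat :=
  \sum_(i < bnd beta) row_count beta gamma T k i.

Definition right_count (beta gamma : seq nat) (T : nat -> nat -> nat) (k c : nat) : nat :=
  \sum_(i < bnd beta) \sum_(c' < bnd beta | c < c')
     (inskew beta gamma i c' && (T i c' == k)).

(* T is an LR-tableau of type (alpha, beta, gamma), where alpha_1 <= 2, so
   alpha' = (alpha'_1, alpha'_2) with alpha'_k = conjpart alpha k. *)
Definition is_LR_tableau (alpha beta gamma : seq nat) (T : nat -> nat -> nat) : Prop :=
  [/\ (forall c, part gamma c <= part beta c),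
      (forall i c, inskew beta gamma i c -> T i c = 1 \/ T i c = 2),
      (tab_count beta gamma T 1 = conjpart alpha 1 /\
       tab_count beta gamma T 2 = conjpart alpha 2) &
      [/\
      (forall i c c', c < c' -> inskew beta gamma i c -> inskew beta gamma i c' ->
          T i c <= T i c'),
      (forall i i' c, i < i' -> inskew beta gamma i c -> inskew beta gamma i' c ->
          T i c < T i' c) &
      (forall c, right_count beta gamma T 2 c <= right_count beta gamma T 1 c)]].

(* A member is a pair (s, n): an arc (m, n) is (Some m, n), a pole at n is
   (None, n) (i.e. the arc (oo, n)). *)
Definition arc := (option nat * nat)%type.

Definition wf_arc (x : arc) : bool :=
  (0 < x.2) && (if x.1 is Some m then x.2 < m else true).

Definition is_pole (x : arc) : bool := x.1 == None.

Definition touches (i : nat) (x : arc) : bool := (x.1 == Some i) || (x.2 == i).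

Definition diagram := {mset arc}.

Definition src_count (D : diagram) (i : nat) : nat :=
  count (fun x : arc => x.1 == Some i) (enum_mset D).

Definition is_arc_diagram (alpha beta gamma : seq nat) (D : diagram) : Prop :=
  [/\ all wf_arc (enum_mset D),
      count (fun x => ~~ is_pole x) (enum_mset D) = conjpart alpha 2,
      count is_pole (enum_mset D) = conjpart alpha 1 - conjpart alpha 2 &
      forall i, 0 < i ->
        count (touches i) (enum_mset D) = conjpart beta i - conjpart gamma i].

Definition in_DGamma (alpha beta gamma : seq nat) (T : nat -> nat -> nat)
    (D : diagram) : Prop :=
  is_arc_diagram alpha beta gamma D /\
  forall i, 0 < i -> src_count D i = row_count beta gamma T 2 i.

Definition arc_move (D D' : diagram) : Prop :=
  exists R : diagram,
    (exists a b c d, [/\ a > b, b > c, c > d &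
       D' = [mset (Some a, c); (Some b, d)] `+` R /\
       (D = [mset (Some a, d); (Some b, c)] `+` R        (* (A) *)
        \/ D = [mset (Some a, b); (Some c, d)] `+` R)])  (* (C) *)
    \/
    (exists a b c, [/\ a > b, b > c &
       D' = [mset (Some a, c); (None, b)] `+` R /\
       (D = [mset (Some a, b); (None, c)] `+` R          (* (B) *)
        \/ D = [mset (Some b, c); (None, a)] `+` R)]).   (* (D) *)

Definition arc_le (D D' : diagram) : Prop := clos_refl_trans diagram arc_move D D'.

Definition is_chain (P : diagram -> Prop) (C : seq diagram) : Prop :=
  uniq C /\ (forall D, D \in C -> P D) /\
  (forall D E, D \in C -> E \in C -> arc_le D E \/ arc_le E D).

Definition saturated_chain (P : diagram -> Prop) (C : seq diagram) : Prop :=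
  is_chain P C /\
  forall C', is_chain P C' -> {subset C <= C'} -> {subset C' <= C}.

(* length of a chain x_0 < x_1 < ... < x_k is k *)
Definition chain_length (C : seq diagram) : nat := (size C).-1.

From Pilot Require Import Defs.
From mathcomp Require Import all_boot zify.
From mathcomp Require Import finmap multiset.
From Stdlib Require Import Relation_Operators Operators_Properties.

Set Implicit Arguments.
Unset Strict Implicit.
Unset Printing Implicit Defensive.

Local Open Scope mset_scope.
Local Open Scope nat_scope.

(* Under conditions (2) and (3) every row carries at most one end of a member, and
   every source (the pole included) lies above every target; the sources and the
   targets of a diagram in D_Gamma are thus prescribed by Gamma, and so is the sum
   of the sources.  Moves (C) and (D) lower that sum, so within D_Gamma only (A)
   and (B) occur: each turns a crossing pair (a, c), (b, d), a > b > c > d, into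
   the nested pair (a, d), (b, c).  Counting crossing pairs grades the poset: an
   (A)/(B) move factors into moves removing exactly one crossing, a minimal
   diagram has no crossing and, since any two members have distinct sources and
   distinct targets, a maximal one has all n(n-1)/2 pairs crossing.  Hence every
   saturated chain has length n(n-1)/2, n being the number of members. *)

Section MsetPairs.
Variable K : choiceType.

Lemma perm_msetD (A B : {mset K}) : perm_eq (A `+` B) (enum_mset A ++ enum_mset B).
Proof. by apply/allP => a _ /=; rewrite count_cat !count_mem_mset msetE2. Qed.

Lemma perm_mset2D (x y : K) (R : {mset K}) :
  perm_eq ([mset x; y] `+` R) [:: x, y & enum_mset R].
Proof.
apply: (perm_trans (perm_msetD _ _)).
rewrite (_ : [:: x, y & _] = [:: x; y] ++ enum_mset R) // perm_cat2r.
by apply: (perm_trans (perm_msetD _ _)); rewrite !enum_msetn.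
Qed.

Lemma count_mset2D (p : pred K) x y (R : {mset K}) :
  count p ([mset x; y] `+` R) = p x + p y + count p R.
Proof. by rewrite (permP (perm_mset2D x y R)) /= addnA. Qed.

Lemma big_mset2D (f : K -> nat) x y (R : {mset K}) :
  \sum_(m <- [mset x; y] `+` R) f m = f x + f y + \sum_(m <- R) f m.
Proof. by rewrite (perm_big _ (perm_mset2D x y R)) !big_cons /= addnA. Qed.

Lemma mem_mset2D z x y (R : {mset K}) :
  (z \in enum_mset ([mset x; y] `+` R)) = [|| z == x, z == y | z \in enum_mset R].
Proof. by rewrite (perm_mem (perm_mset2D x y R)) !inE. Qed.

Lemma mset1E (x z : K) : [mset x] z = (z == x).
Proof. by rewrite msetnE; case: eqP. Qed.

Lemma mset_split2 (D : {mset K}) (m m' : K) : m != m' ->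
  m \in enum_mset D -> m' \in enum_mset D ->
  D = [mset m; m'] `+` (D `\` [mset m; m']).
Proof.
move=> nm mD m'D; rewrite msetBDKC //; apply/msubsetP => z.
rewrite msetE2 !mset1E.
have Dm : 0 < D m by rewrite -in_mset.
have Dm' : 0 < D m' by rewrite -in_mset.
case: (eqVneq z m) => [->|_]; first by rewrite (negbTE nm).
by case: (eqVneq z m') => [->|_].
Qed.

Lemma count_le1_rest (p : pred K) x y (R : {mset K}) m :
  count p ([mset x; y] `+` R) <= 1 -> p x || p y -> m \in enum_mset R -> ~~ p m.
Proof.
rewrite count_mset2D => H Hxy Hm; apply/negP => pm.
have : 0 < count p R by rewrite -has_count; apply/hasP; exists m; rewrite /= ?eqxx.
by move: H Hxy; case: (p x); case: (p y) => //=; lia.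
Qed.

End MsetPairs.

Ltac mset_arith := apply/msetP => ?; rewrite ?msetE2 ?mset1DE ?mset1E; lia.

Section SeqCounting.
Variable T : eqType.

Lemma count_lt_sub (p q : pred T) (s : seq T) x :
  subpred p q -> x \in s -> q x -> ~~ p x -> count p s < count q s.
Proof.
move=> pq; elim: s => //= y s IH; rewrite inE => /orP [/eqP <- | xs] qx npx.
- by rewrite qx (negbTE npx) add0n add1n ltnS; apply: sub_count.
- have := IH xs qx npx; case py: (p y); first by rewrite (pq y py) /=; lia.
  by case: (q y) => /=; lia.
Qed.

Lemma count_gt1 (p : pred T) (s : seq T) m m' :
  m != m' -> m \in s -> m' \in s -> p m -> p m' -> 1 < count p s.
Proof.
move=> nm ms m's pm pm'.
have := count_predUI (pred1 m) (pred1 m') s.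
have -> : count (predI (pred1 m) (pred1 m')) s = 0.
  apply/eqP; rewrite -leqn0 leqNgt -has_count; apply/hasPn => z _ /=.
  by apply/andP => [[/eqP -> /eqP]]; apply/eqP.
have : count (predU (pred1 m) (pred1 m')) s <= count p s.
  by apply: sub_count => z /= /orP [] /eqP ->.
have : 0 < count (pred1 m) s by rewrite -has_count; apply/hasP; exists m; rewrite /= ?eqxx.
have : 0 < count (pred1 m') s by rewrite -has_count; apply/hasP; exists m'; rewrite /= ?eqxx.
lia.
Qed.

Lemma seq_extremum (r : rel T) (s : seq T) : total r -> transitive r ->
  s != [::] -> exists2 x, x \in s & forall y, y \in s -> r x y.
Proof.
move=> rtot rtr; elim: s => // x s IH _.
case: (eqVneq s [::]) => [->|/IH [z zs Hz]].
  by exists x; rewrite ?inE // => y; rewrite inE => /eqP ->; case/orP: (rtot x x).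
case/orP: (rtot x z) => H.
- exists x; first by rewrite inE eqxx.
  by move=> y; rewrite inE => /orP [/eqP -> | /Hz]; [case/orP: (rtot x x) | apply: rtr].
- exists z; first by rewrite inE zs orbT.
  by move=> y; rewrite inE => /orP [/eqP -> | /Hz].
Qed.

End SeqCounting.

(* The order of sources on the line, a pole [None] being the source at infinity. *)
Definition src_gt (x y : option nat) : bool :=
  match x, y with
  | None, Some _ => true
  | Some a, Some b => b < a
  | _, _ => false
  end.

Lemma src_gtxx x : src_gt x x = false.
Proof. by case: x => [a|] //=; rewrite ltnn. Qed.

Lemma src_gt_trans x y z : src_gt x y -> src_gt y z -> src_gt x z.
Proof. by case: x => [a|]; case: y => [b|]; case: z => [c|] //=; lia. Qed.

Lemma src_gt_asym x y : src_gt x y -> src_gt y x = false.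
Proof. by case: x => [a|]; case: y => [b|] //=; lia. Qed.

Lemma src_gt_total x y : x != y -> src_gt x y || src_gt y x.
Proof.
case: x => [a|]; case: y => [b|] //= H.
by rewrite -neq_ltn eq_sym; apply: contraNneq H => ->.
Qed.

Lemma src_gtN x : src_gt x None = false.
Proof. by case: x. Qed.

(* With [a > b > c > d], the members [(a, c)] and [(b, d)] cross while [(a, d)]
   and [(b, c)] nest. *)
Definition crossing (m m' : Defs.arc) : bool :=
  (src_gt m.1 m'.1 && (m'.2 < m.2)) || (src_gt m'.1 m.1 && (m.2 < m'.2)).

Lemma crossingxx m : crossing m m = false.
Proof. by rewrite /crossing src_gtxx. Qed.

Lemma crossingC m m' : crossing m m' = crossing m' m.
Proof. by rewrite /crossing orbC. Qed.

Definition inside (a : option nat) (b c d : nat) (m : Defs.arc) : bool :=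
  [&& src_gt a m.1, src_gt m.1 (Some b), d < m.2 & m.2 < c].

Lemma crossing_exchange (a' : option nat) (b c d : nat) (m : Defs.arc) :
  src_gt a' (Some b) -> d < c -> m.1 != a' -> m.1 != Some b -> m.2 != c -> m.2 != d ->
  ~~ inside a' b c d m ->
  crossing (a', c) m + crossing (Some b, d) m = crossing (a', d) m + crossing (Some b, c) m.
Proof.
case: m => [[s|] t]; case: a' => [a|] //=; rewrite /inside /crossing /=;
  move=> H1 H2 H3 H4 /eqP H5 /eqP H6;
  rewrite ?(inj_eq (@Some_inj _)) in H3 H4;
  repeat match goal with |- context [?x < ?y] => case: (ltnP x y) => ? end;
  rewrite //=; lia.
Qed.

Definition src_sum (D : diagram) : nat :=
  \sum_(m <- enum_mset D) if m.1 is Some s then s else 0.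

(* Ordered pairs are counted, so this is twice the number of crossings. *)
Definition crossings (D : diagram) : nat :=
  \sum_(m <- enum_mset D) \sum_(m' <- enum_mset D) crossing m m'.

Lemma crossings_mset2D x y (R : diagram) :
  crossings ([mset x; y] `+` R) = crossing x y + crossing y x +
    \sum_(m <- enum_mset R) (crossing x m + crossing y m + (crossing m x + crossing m y)) +
    crossings R.
Proof.
rewrite /crossings; under eq_bigr do rewrite big_mset2D.
by rewrite big_mset2D !crossingxx !big_split /=; lia.
Qed.

(* Moves (A) and (B): the targets [c > d] of two crossing members with sources
   [a > b] are exchanged, [a] possibly being a pole. *)
Definition swap (D F : diagram) (a : option nat) (b c d : nat) (R : diagram) : Prop :=
  [/\ src_gt a (Some b), c < b, d < c,
      F = [mset (a, c); (Some b, d)] `+` R &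
      D = [mset (a, d); (Some b, c)] `+` R].

Definition swap_move (D F : diagram) : Prop := exists a b c d R, swap D F a b c d R.

Lemma swap_move_arc_move D F : swap_move D F -> arc_move D F.
Proof.
move=> [[a|] [b [c [d [R [/= ab bc cd -> ->]]]]]]; exists R.
- by left; exists a, b, c, d; split => //; split => //; left.
- by right; exists b, c, d; split => //; split; [|left]; mset_arith.
Qed.

Lemma count_src_swap_move (p : pred (option nat)) D F : swap_move D F ->
  count (fun m : Defs.arc => p m.1) (enum_mset D) =
  count (fun m : Defs.arc => p m.1) (enum_mset F).
Proof. by move=> [a [b [c [d [R [_ _ _ -> ->]]]]]]; rewrite !count_mset2D. Qed.

Lemma src_sum_swap_move D F : swap_move D F -> src_sum D = src_sum F.
Proof. by move=> [a [b [c [d [R [_ _ _ -> ->]]]]]]; rewrite /src_sum !big_mset2D. Qed.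

Lemma arc_move_src_sum D F : arc_move D F -> src_sum D < src_sum F \/ swap_move D F.
Proof.
move=> [R [[a [b [c [d [ab bc cd [-> [->|->]]]]]]]|[a [b [c [ab bc [-> [->|->]]]]]]]].
- by right; exists (Some a), b, c, d, R.
- by left; rewrite /src_sum !big_mset2D /=; lia.
- by right; exists None, a, b, c, R; split => //; mset_arith.
- by left; rewrite /src_sum !big_mset2D /=; lia.
Qed.

Lemma arc_le_src_sum D F : arc_le D F ->
  src_sum D <= src_sum F /\ (src_sum D = src_sum F -> clos_refl_trans _ swap_move D F).
Proof.
elim=> [x y /arc_move_src_sum [lt | sw] | x | x y z _ [le1 eq1] _ [le2 eq2]].
- by split; [exact: ltnW | lia].
- by rewrite (src_sum_swap_move sw); split => // _; apply: rt_step.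
- by split => // _; apply: rt_refl.
- split; first exact: leq_trans le2.
  by move=> eq; apply: (rt_trans _ _ _ y); [apply: eq1 | apply: eq2]; lia.
Qed.

(* A swap across a member [(Some s, t)] lying inside it is the composite of three
   swaps, each with fewer sources strictly between its two sources. *)
Lemma swap_factor D F a b c d R s t :
  swap D F a b c d ((Some s, t) +` R) -> inside a b c d (Some s, t) -> c < s ->
  exists G1 G2, [/\ swap D G2 a s t d ([mset (Some b, c)] `+` R),
                    swap G2 G1 (Some s) b c d ([mset (a, t)] `+` R) &
                    swap G1 F a s c t ([mset (Some b, d)] `+` R)].
Proof.
move=> [ab bc cd -> ->] /and4P [/= as_ sb dt tc] cs.
exists ([mset (a, t); (Some s, c)] `+` ([mset (Some b, d)] `+` R)).
exists ([mset (Some s, d); (Some b, c)] `+` ([mset (a, t)] `+` R)).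
split; split => //; try mset_arith.
exact: ltn_trans tc cs.
Qed.

Definition between (a : option nat) (b : nat) (F : diagram) : nat :=
  count (fun m : Defs.arc => src_gt a m.1 && src_gt m.1 (Some b)) (enum_mset F).

Lemma between_swap_move a b D F : swap_move D F -> between a b D = between a b F.
Proof. exact: (count_src_swap_move (fun o => src_gt a o && src_gt o (Some b))). Qed.

Lemma between_lt a b s t F : (Some s, t) \in enum_mset F ->
  src_gt a (Some s) -> b < s ->
  between a s F < between a b F /\ between (Some s) b F < between a b F.
Proof.
move=> sF as_ bs; split; apply: (count_lt_sub _ sF) => /=;
  rewrite ?as_ ?bs ?ltnn ?andbF //= => -[x1 x2] /= /andP [h1 h2].
- by rewrite h1 (@src_gt_trans _ (Some s)).
- by rewrite h2 andbT (@src_gt_trans _ (Some s)).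
Qed.

Lemma swap_neq D F a b c d R : swap D F a b c d R -> D <> F.
Proof.
move=> [ab _ cd -> ->] /(congr1 (fun X : diagram => X (a, c))) /eqP.
have nab : (a == Some b) = false by apply: contraTF ab => /eqP ->; rewrite src_gtxx.
by rewrite !msetE2 !mset1E !xpair_eqE !eqxx nab (gtn_eqF cd) /= => /eqP; lia.
Qed.

Lemma exists_swap_to D a b c d : (a, c) \in enum_mset D -> (Some b, d) \in enum_mset D ->
  src_gt a (Some b) -> c < b -> d < c ->
  exists E, swap E D a b c d (D `\` [mset (a, c); (Some b, d)]).
Proof.
move=> acD bdD ab bc cd.
exists ([mset (a, d); (Some b, c)] `+` (D `\` [mset (a, c); (Some b, d)])).
split => //; apply: mset_split2 => //.
by apply: contraTneq ab => -[-> _]; rewrite src_gtxx.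
Qed.

Lemma exists_swap_from D a b c d : (a, d) \in enum_mset D -> (Some b, c) \in enum_mset D ->
  src_gt a (Some b) -> c < b -> d < c ->
  exists F, swap D F a b c d (D `\` [mset (a, d); (Some b, c)]).
Proof.
move=> adD bcD ab bc cd.
exists ([mset (a, c); (Some b, d)] `+` (D `\` [mset (a, d); (Some b, c)])).
split => //; apply: mset_split2 => //.
by apply: contraTneq ab => -[-> _]; rewrite src_gtxx.
Qed.

Section GradedByCrossings.
Variables (P : diagram -> Prop) (n : nat).
Hypothesis swap_closed : forall D F, swap_move D F -> P D <-> P F.
Hypothesis src_sum_const : forall D E, P D -> P E -> src_sum D = src_sum E.
Hypothesis target_gt0 : forall D m, P D -> m \in enum_mset D -> 0 < m.2.
Hypothesis src_gt_target : forall D m m', P D -> m \in enum_mset D -> m' \in enum_mset D ->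
  src_gt m.1 (Some m'.2).
Hypothesis touches_le1 : forall D i, P D -> 0 < i -> count (touches i) (enum_mset D) <= 1.
Hypothesis pole_le1 : forall D, P D -> count is_pole (enum_mset D) <= 1.
Hypothesis size_const : forall D, P D -> size (enum_mset D) = n.

Definition cover (D F : diagram) : Prop :=
  [/\ P D, P F, swap_move D F & crossings F = crossings D + 2].

Local Notation covers := (clos_refl_trans _ cover).

(* Each endpoint of the two swapped members is touched once in [F], so no other
   member shares it. *)
Lemma swap_rest_apart D F a b c d R m : swap D F a b c d R -> P F -> m \in enum_mset R ->
  [/\ m.1 != a, m.1 != Some b, m.2 != c & m.2 != d].
Proof.
move=> [ab bc cd eF _] PF mR.
have rest p : count p (enum_mset F) <= 1 -> p (a, c) || p (Some b, d) -> ~~ p m.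
  by rewrite eF => p1 pxy; apply: count_le1_rest p1 pxy mR.
have apart i : 0 < i -> touches i (a, c) || touches i (Some b, d) ->
    (m.1 != Some i) && (m.2 != i).
  by move=> i0 /(rest _ (touches_le1 PF i0)); rewrite /touches negb_or.
have c0 : 0 < c by apply: (target_gt0 (m := (a, c)) PF); rewrite eF mem_mset2D eqxx.
have d0 : 0 < d by apply: (target_gt0 (m := (Some b, d)) PF); rewrite eF mem_mset2D eqxx orbT.
have /andP [_ ->] : (m.1 != Some c) && (m.2 != c).
  by apply: apart; rewrite // /touches eqxx !orbT.
have /andP [_ ->] : (m.1 != Some d) && (m.2 != d).
  by apply: apart; rewrite // /touches eqxx !orbT.
have /andP [-> _] : (m.1 != Some b) && (m.2 != b).
  by apply: apart; rewrite ?(ltn_trans c0) // /touches eqxx !orbT.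
split=> //; case Ea: a ab => [a0|] ab.
- have /andP [] // : (m.1 != Some a0) && (m.2 != a0).
  by apply: apart; rewrite ?(leq_ltn_trans _ ab) // /touches Ea eqxx.
- by apply: rest (pole_le1 PF) _; rewrite /is_pole Ea eqxx.
Qed.

Lemma swap_crossings D F a b c d R : swap D F a b c d R -> P F ->
  (forall m, m \in enum_mset R -> ~~ inside a b c d m) ->
  crossings F = crossings D + 2.
Proof.
move=> sw PF out; have [ab _ cd eF eD] := sw.
have exchange m : m \in enum_mset R ->
    crossing (a, c) m + crossing (Some b, d) m = crossing (a, d) m + crossing (Some b, c) m.
  move=> mR; have [ma mb mc md] := swap_rest_apart sw PF mR.
  exact: crossing_exchange ab cd ma mb mc md (out m mR).
have exchange' m : m \in enum_mset R ->
    crossing m (a, c) + crossing m (Some b, d) = crossing m (a, d) + crossing m (Some b, c).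
  by move=> mR; rewrite ![crossing m _]crossingC exchange.
have crossing_pair : crossing (a, c) (Some b, d) && ~~ crossing (a, d) (Some b, c).
  by rewrite /crossing ab (src_gt_asym ab) cd /= orbF -leqNgt ltnW.
rewrite eF eD !crossings_mset2D.
under eq_big_seq => m mR do rewrite exchange // exchange' //.
rewrite ![crossing (Some b, _) _]crossingC.
by case/andP: crossing_pair => -> /negbTE ->; rewrite addn0 -addnA addnC.
Qed.

Lemma swap_covers k D F a b c d R :
  swap D F a b c d R -> between a b F < k -> P F -> covers D F.
Proof.
elim: k D F a b c d R => [|k IH] D F a b c d R sw lt_k PF //.
have sDF : swap_move D F by exists a, b, c, d, R.
case: (boolP (has (inside a b c d) (enum_mset R))) => [|/hasPn out]; last first.
  apply: rt_step; split => //; first exact/(swap_closed sDF).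
  exact: swap_crossings sw PF out.
move=> /hasP [[[s|] t] sR ins]; last by rewrite /inside src_gtN in ins.
set R' := R `\ (Some s, t).
have eR : R = (Some s, t) +` R' by rewrite msetB1K // -in_mset.
have [_ _ _ eF _] := sw.
have sF : (Some s, t) \in enum_mset F by rewrite eF mem_mset2D sR !orbT.
have cs : c < s.
  by apply: (src_gt_target (m' := (a, c)) PF sF); rewrite eF mem_mset2D eqxx.
rewrite eR in sw; have [G1 [G2 [s1 s2 s3]]] := swap_factor sw ins cs.
have sG2G1 : swap_move G2 G1 by exists (Some s), b, c, d, ([mset (a, t)] `+` R').
have sG1F : swap_move G1 F by exists a, s, c, t, ([mset (Some b, d)] `+` R').
have PG1 : P G1 by apply/(swap_closed sG1F).
have PG2 : P G2 by apply/(swap_closed sG2G1).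
case/and4P: ins => [/= as_ sb _ _].
have [lt_as lt_sb] := between_lt sF as_ sb.
have below x : x < between a b F -> x < k by move=> h; apply: leq_trans h _; rewrite -ltnS.
apply: (rt_trans _ _ _ G2); last apply: (rt_trans _ _ _ G1).
- apply: (IH _ _ _ _ _ _ _ s1) => //; apply: below.
  by rewrite (between_swap_move _ _ sG2G1) (between_swap_move _ _ sG1F).
- apply: (IH _ _ _ _ _ _ _ s2) => //; apply: below.
  by rewrite (between_swap_move _ _ sG1F).
- exact: (IH _ _ _ _ _ _ _ s3 (below _ lt_as)).
Qed.

Lemma swap_move_covers D F : swap_move D F -> P F -> covers D F.
Proof. by move=> [a [b [c [d [R sw]]]]]; apply: (swap_covers sw (ltnSn _)). Qed.

Lemma swap_closure_covers D F : clos_refl_trans _ swap_move D F -> P F -> P D /\ covers D F.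
Proof.
elim=> [x y sxy Py | x Px | x y z _ IHxy _ IHyz Pz].
- by split; [apply/(swap_closed sxy) | apply: swap_move_covers].
- by split => //; apply: rt_refl.
- have [Py cyz] := IHyz Pz; have [Px cxy] := IHxy Py.
  by split => //; apply: rt_trans cxy cyz.
Qed.

Lemma arc_le_covers D F : arc_le D F -> P D -> P F -> covers D F.
Proof.
move=> /arc_le_src_sum [_ sw] PD PF.
exact: (swap_closure_covers (sw (src_sum_const PD PF)) PF).2.
Qed.

Lemma covers_arc_le D F : covers D F -> arc_le D F.
Proof.
elim=> [x y [_ _ sxy _] | x | x y z _ lexy _ leyz].
- exact/rt_step/swap_move_arc_move.
- exact: rt_refl.
- exact: rt_trans lexy leyz.
Qed.

Lemma covers_crossings D F : covers D F ->
  exists k, crossings F = crossings D + k.*2 /\ (k = 0 -> D = F).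
Proof.
elim=> [x y [_ _ _ ->] | x | x y z _ [k1 [e1 eq1]] _ [k2 [e2 eq2]]].
- by exists 1.
- by exists 0; rewrite addn0.
- exists (k1 + k2); split; first by rewrite e2 e1 doubleD addnA.
  by move=> k0; rewrite eq1 ?eq2 //; lia.
Qed.

Lemma covers_first_step D F : covers D F -> D <> F -> exists2 G, cover D G & covers G F.
Proof.
move=> cDF nDF; case: (clos_rt_rt1n _ _ _ _ cDF) nDF => [//|y z cy cz _].
by exists y => //; apply: clos_rt1n_rt.
Qed.

Definition minimal (D : diagram) : Prop := forall E, P E -> arc_le E D -> E = D.
Definition maximal (D : diagram) : Prop := forall F, P F -> arc_le D F -> F = D.

Lemma minimal_uncrossed D m m' : P D -> minimal D ->
  m \in enum_mset D -> m' \in enum_mset D -> ~~ crossing m m'.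
Proof.
move=> PD minD; suff no_pair x y : x \in enum_mset D -> y \in enum_mset D ->
    ~~ (src_gt x.1 y.1 && (y.2 < x.2)).
  by move=> mD m'D; rewrite /crossing negb_or !no_pair.
case: x => a c; case: y => [[b|] d] xD yD; rewrite /= ?src_gtN //.
apply/andP => -[ab dc].
have bc : c < b by apply: (src_gt_target PD yD xD).
have [E sw] := exists_swap_to xD yD ab bc dc.
have sED : swap_move E D by exists a, b, c, d, (D `\` [mset (a, c); (Some b, d)]).
apply: (swap_neq sw); apply: minD; first exact/(swap_closed sED).
exact/rt_step/swap_move_arc_move.
Qed.

Lemma crossings_minimal D : P D -> minimal D -> crossings D = 0.
Proof.
move=> PD minD; rewrite /crossings big1_seq // => m /andP [_ mD].
rewrite big1_seq // => m' /andP [_ m'D].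
by rewrite (negbTE (minimal_uncrossed PD minD mD m'D)).
Qed.

Lemma member_src_neq D m m' : P D -> m \in enum_mset D -> m' \in enum_mset D ->
  m != m' -> m.1 != m'.1.
Proof.
move=> PD mD m'D nm; apply/eqP => es; case Em: m.1 es => [s|] es.
- have s0 : 0 < s by have := src_gt_target PD mD mD; rewrite Em; apply: leq_ltn_trans.
  have := count_gt1 (p := touches s) nm mD m'D.
  by rewrite /touches Em -es eqxx => /(_ isT isT); rewrite ltnNge touches_le1.
- have := count_gt1 (p := is_pole) nm mD m'D.
  by rewrite /is_pole Em -es => /(_ isT isT); rewrite ltnNge pole_le1.
Qed.

Lemma member_tgt_neq D m m' : P D -> m \in enum_mset D -> m' \in enum_mset D ->
  m != m' -> m.2 != m'.2.
Proof.
move=> PD mD m'D nm; apply/eqP => et.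
have := count_gt1 (p := touches m.2) nm mD m'D.
rewrite /touches -et eqxx !orbT => /(_ isT isT).
by rewrite ltnNge touches_le1 ?(target_gt0 PD mD).
Qed.

Lemma maximal_crossed D m m' : P D -> maximal D ->
  m \in enum_mset D -> m' \in enum_mset D -> m != m' -> crossing m m'.
Proof.
move=> PD maxD; wlog ms : m m' / src_gt m.1 m'.1 => [wlog_ms | mD m'D nm].
  move=> mD m'D nm; have /src_gt_total := member_src_neq PD mD m'D nm.
  by case/orP => [/wlog_ms | /wlog_ms]; [apply | rewrite crossingC; apply; rewrite // eq_sym].
have /negbTE tneq := member_tgt_neq PD mD m'D nm.
rewrite /crossing ms /=; case: ltngtP tneq => // tlt _.
move: m m' ms mD m'D {nm} tlt => [a d] [[b|] c] //= ab adD bcD dc; last by case: (a) ab.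
have bc : c < b by apply: (src_gt_target PD bcD bcD).
have [F sw] := exists_swap_from adD bcD ab bc dc.
have sDF : swap_move D F by exists a, b, c, d, (D `\` [mset (a, d); (Some b, c)]).
exfalso; apply: (swap_neq sw); symmetry; apply: maxD; first exact/(swap_closed sDF).
exact/rt_step/swap_move_arc_move.
Qed.

Lemma crossings_maximal D : P D -> maximal D -> crossings D = n * n.-1.
Proof.
move=> PD maxD; transitivity (\sum_(m <- enum_mset D) n.-1); last first.
  by rewrite big_const_seq count_predT iter_addn_0 (size_const PD) mulnC.
apply: eq_big_seq => m mD.
have once : count_mem m (enum_mset D) = 1.
  apply/eqP; rewrite eqn_leq -has_count; apply/andP; split.
    2: by apply/hasP; exists m; rewrite /= ?eqxx.
  apply: leq_trans (touches_le1 PD (target_gt0 PD mD)).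
  by apply: sub_count => z /eqP ->; rewrite /touches eqxx orbT.
rewrite -(size_const PD) -(count_predC (pred1 m)) once add1n /= -sum1_count [RHS]big_mkcond.
apply: eq_big_seq => m' m'D /=; case: (eqVneq m' m) => [->|nm]; first by rewrite crossingxx.
by rewrite (maximal_crossed PD maxD) // eq_sym.
Qed.

Lemma chain_covers C D E : is_chain P C -> D \in C -> E \in C -> covers D E \/ covers E D.
Proof.
move=> [_ [PC cmp]] DC EC.
by case: (cmp D E DC EC) => le; [left | right]; apply: arc_le_covers => //; apply: PC.
Qed.

Lemma chain_covers_le C D E : is_chain P C -> D \in C -> E \in C ->
  crossings D <= crossings E -> covers D E.
Proof.
move=> chC DC EC le_DE; case: (chain_covers chC DC EC) => // cED.
have [k [eD eq0]] := covers_crossings cED.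
by rewrite eq0; [apply: rt_refl | lia].
Qed.

Lemma chain_crossings_inj C D E : is_chain P C -> D \in C -> E \in C ->
  crossings D = crossings E -> D = E.
Proof.
move=> chC DC EC eDE.
have [k [eE eq0]] := covers_crossings (chain_covers_le chC DC EC (eq_leq eDE)).
by apply: eq0; lia.
Qed.

Lemma saturated_chain_extend C F : saturated_chain P C -> P F ->
  (forall G, G \in C -> arc_le G F \/ arc_le F G) -> F \in C.
Proof.
move=> [[uC [PC cmp]] satC] PF cmpF; apply: contraT => FnC.
have chFC : is_chain P (F :: C).
  split; first by rewrite /= FnC.
  split=> [D|D E]; rewrite !inE; first by case/orP => [/eqP ->|/PC].
  case/orP => [/eqP ->|DC] /orP [/eqP ->|EC]; first by left; apply: rt_refl.
  - by case: (cmpF E EC); [right | left].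
  - exact: cmpF.
  - exact: cmp.
have sub : {subset C <= F :: C} by move=> G GC; rewrite inE GC orbT.
by rewrite (satC _ chFC sub F (mem_head F C)) in FnC.
Qed.

Lemma saturated_chain_minimal C D : saturated_chain P C -> D \in C ->
  (forall E, E \in C -> crossings D <= crossings E) -> minimal D.
Proof.
move=> satC DC minD E PE leED; have chC := satC.1; have PD := chC.2.1 D DC.
have EC : E \in C.
  apply: (saturated_chain_extend satC PE) => G GC; right.
  exact: (rt_trans _ _ _ _ _ leED) (covers_arc_le (chain_covers_le chC DC GC (minD G GC))).
have [k [eD eq0]] := covers_crossings (arc_le_covers leED PE PD).
by apply: eq0; have := minD E EC; lia.
Qed.

Lemma saturated_chain_maximal C D : saturated_chain P C -> D \in C ->
  (forall E, E \in C -> crossings E <= crossings D) -> maximal D.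
Proof.
move=> satC DC maxD F PF leDF; have chC := satC.1; have PD := chC.2.1 D DC.
have FC : F \in C.
  apply: (saturated_chain_extend satC PF) => G GC; left.
  exact: (rt_trans _ _ _ _ _ (covers_arc_le (chain_covers_le chC GC DC (maxD G GC))) leDF).
have [k [eF eq0]] := covers_crossings (arc_le_covers leDF PD PF).
by symmetry; apply: eq0; have := maxD F FC; lia.
Qed.

(* The first cover on the way from [D] to the next element of [C] is comparable
   with all of [C], so saturation puts it in [C]. *)
Lemma saturated_chain_step C D M : saturated_chain P C -> D \in C -> M \in C ->
  crossings D < crossings M -> exists2 E, E \in C & crossings E = crossings D + 2.
Proof.
move=> satC DC MC ltDM; have chC := satC.1.
have [E] : exists2 E, E \in [seq E <- C | crossings D < crossings E] &
    forall G, G \in [seq E <- C | crossings D < crossings E] -> crossings E <= crossings G.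
  apply: seq_extremum => [x y|x y z|]; [exact: leq_total | exact: leq_trans |].
  by apply/eqP => /(congr1 (fun s => M \in s)); rewrite mem_filter ltDM MC.
rewrite mem_filter => /andP [ltDE EC] minE.
have nDE : D <> E by move=> eDE; rewrite eDE ltnn in ltDE.
have [G [_ PG sDG eG] cGE] := covers_first_step (chain_covers_le chC DC EC (ltnW ltDE)) nDE.
exists G => //; apply: (saturated_chain_extend satC PG) => H HC.
have [leHD | ltDH] := leqP (crossings H) (crossings D).
- left; apply: (rt_trans _ _ _ _ _ (covers_arc_le (chain_covers_le chC HC DC leHD))).
  by apply/rt_step/swap_move_arc_move.
- right; apply: (rt_trans _ _ _ _ _ (covers_arc_le cGE)).
  by apply/covers_arc_le/(chain_covers_le chC EC HC)/minE; rewrite mem_filter ltDH.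
Qed.

(* Crossings along [C] take every even value from [0] to [n * n.-1] exactly once. *)
Lemma saturated_chain_size C : saturated_chain P C -> C != [::] ->
  size C = (n * n.-1)./2.+1.
Proof.
move=> satC nC; have chC := satC.1; have PC := chC.2.1.
have [D0 D0C minD0] := seq_extremum (r := fun D E => crossings D <= crossings E)
  (fun _ _ => leq_total _ _) (fun _ _ _ => @leq_trans _ _ _) nC.
have [M MC maxM] := seq_extremum (r := fun D E => crossings E <= crossings D)
  (fun _ _ => leq_total _ _) (fun _ _ _ h1 h2 => leq_trans h2 h1) nC.
have c0 := crossings_minimal (PC _ D0C) (saturated_chain_minimal satC D0C minD0).
have cM := crossings_maximal (PC _ MC) (saturated_chain_maximal satC MC maxM).
have even D : D \in C -> crossings D = (crossings D)./2.*2.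
  move=> DC; have [k [-> _]] := covers_crossings (chain_covers_le chC D0C DC (minD0 D DC)).
  by rewrite c0 doubleK.
pose K := (crossings M)./2.
have memC x : (x \in [seq (crossings D)./2 | D <- C]) = (x < K.+1).
  apply/mapP/idP => [[D DC ->] | ]; first by rewrite ltnS half_leq ?maxM.
  elim: x => [_|x IH ltxK]; first by exists D0; rewrite // c0.
  have [D DC eD] := IH (ltnW ltxK).
  have ltDM : crossings D < crossings M by rewrite (even D DC) (even M MC) -eD ltn_double.
  have [E EC eE] := saturated_chain_step satC DC MC ltDM.
  by exists E; rewrite // eE (even D DC) -eD addn2 -doubleS doubleK.
have uniqC : uniq [seq (crossings D)./2 | D <- C].
  rewrite map_inj_in_uniq ?chC.1 // => D E DC EC eDE.
  by apply: (chain_crossings_inj chC DC EC); rewrite (even D DC) (even E EC) eDE.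
have /perm_size : perm_eq [seq (crossings D)./2 | D <- C] (iota 0 K.+1).
  by apply: uniq_perm (iota_uniq 0 K.+1) _ => // x; rewrite memC mem_iota.
by rewrite size_map size_iota /K cM.
Qed.

Lemma saturated_chain_nil D : saturated_chain P [::] -> P D -> False.
Proof.
move=> [_ satC] PD; have chD : is_chain P [:: D].
  split=> //; split=> [E|E F]; rewrite !inE; first by move/eqP ->.
  by move=> /eqP -> /eqP ->; left; apply: rt_refl.
have sub : {subset [::] <= [:: D]} by [].
by have := satC _ chD sub D (mem_head D [::]).
Qed.

Lemma saturated_chains_length C1 C2 : saturated_chain P C1 -> saturated_chain P C2 ->
  chain_length C1 = chain_length C2.
Proof.
have nil C C' : saturated_chain P C -> saturated_chain P C' -> C = [::] -> C' = [::].
  move=> satC [[_ [PC' _]] _] eC; case: C' PC' => // D C' PC'; rewrite eC in satC.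
  by case: (saturated_chain_nil satC (PC' D (mem_head D C'))).
move=> sat1 sat2; rewrite /chain_length.
have [e1|n1] := eqVneq C1 [::]; first by rewrite e1 (nil C1 C2).
have n2 : C2 != [::] by apply: contra_neq n1; apply: nil.
by rewrite !saturated_chain_size.
Qed.

End GradedByCrossings.

Lemma touchesE i (x : Defs.arc) : src_gt x.1 (Some x.2) ->
  touches i x = (x.1 == Some i) + (x.2 == i) :> nat.
Proof.
case: x => [[s|] t] /= st; rewrite /touches /=; last by case: (t == i).
case: (eqVneq (Some s) (Some i)) => [[<-]|_] /=; last by case: (t == i).
by rewrite (ltn_eqF st).
Qed.

Lemma size_le_sumn (s : seq nat) : all (fun p => 0 < p) s -> size s <= sumn s.
Proof. by elim: s => //= x s IH /andP [x0 /IH]; lia. Qed.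

Lemma row_count_gt0 beta gamma (T : nat -> nat -> nat) k i c :
  c < bnd beta -> inskew beta gamma i c -> T i c = k -> 0 < row_count beta gamma T k i.
Proof. by move=> cb box Tc; rewrite /row_count (bigD1 (Ordinal cb)) //= box Tc eqxx. Qed.

Section DGamma.
Variables (alpha beta gamma : seq nat) (T : nat -> nat -> nat).
Local Notation P := (in_DGamma alpha beta gamma T).

Lemma in_DGamma_swap_move D F : swap_move D F -> P D <-> P F.
Proof.
move=> [a [b [c [d [R [ab bc cd -> ->]]]]]].
have ac : src_gt a (Some c) by apply: src_gt_trans ab _.
have ad : src_gt a (Some d) by apply: src_gt_trans ac _.
have e_wf : all wf_arc ([mset (a, d); (Some b, c)] `+` R) =
            all wf_arc ([mset (a, c); (Some b, d)] `+` R).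
  rewrite !(perm_all _ (perm_mset2D _ _ _)) /= !andbA; congr (_ && _).
  by rewrite /wf_arc /=; case: a ab ac ad => [a|] /=; lia.
have e_touches i : count (touches i) ([mset (a, d); (Some b, c)] `+` R) =
                   count (touches i) ([mset (a, c); (Some b, d)] `+` R).
  rewrite !count_mset2D !touchesE //=; lia.
rewrite /in_DGamma /is_arc_diagram /src_count /is_pole e_wf !count_mset2D /=.
split=> -[[wf np po tD] sD]; split=> [|i i0]; try by rewrite -sD // !count_mset2D.
- by split=> // i i0; rewrite -e_touches tD.
- by split=> // i i0; rewrite e_touches tD.
Qed.

Lemma in_DGamma_wf_arc D m : P D -> m \in enum_mset D -> wf_arc m.
Proof. by move=> [[wfD _ _ _] _] /(allP wfD). Qed.

Lemma in_DGamma_size D : P D ->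
  size (enum_mset D) = conjpart alpha 2 + (conjpart alpha 1 - conjpart alpha 2).
Proof.
move=> [[_ arcs poles _] _]; rewrite -poles -arcs addnC -(count_predC is_pole).
by congr (_ + _); apply: eq_count.
Qed.

(* The sources of a diagram in [D_Gamma], poles included, are prescribed by [Gamma]. *)
Lemma in_DGamma_src_sum D E : P D -> P E -> src_sum D = src_sum E.
Proof.
move=> PD PE; have srcs X : P X -> forall o,
    count (pred1 o) (map fst (enum_mset X)) =
    if o is Some i then row_count beta gamma T 2 i * (0 < i)
    else conjpart alpha 1 - conjpart alpha 2.
  move=> PX [i|]; rewrite count_map; last by case: PX => [[_ _ <- _] _]; apply: eq_count.
  have [->|i0] := posnP i; last by rewrite muln1 -PX.2 //; apply: eq_count.
  rewrite muln0; apply/eqP; rewrite -leqn0 leqNgt -has_count; apply/hasPn => m mX /=.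
  by apply: contraTN (in_DGamma_wf_arc PX mX) => /eqP; rewrite /wf_arc => ->; rewrite ltn0 andbF.
have perm_src : perm_eq (map fst (enum_mset D)) (map fst (enum_mset E)).
  by apply/allP => o _; apply/eqP; rewrite (srcs D PD) (srcs E PE).
by rewrite /src_sum -!(big_map fst xpredT (fun o => if o is Some s then s else 0))
  (perm_big _ perm_src).
Qed.

Section LRConditions.
Hypothesis beta_partition : is_partition beta.
Hypothesis LR : is_LR_tableau alpha beta gamma T.
Hypothesis twos_vs_ones : tab_count beta gamma T 2 = tab_count beta gamma T 1 \/
  tab_count beta gamma T 2 = (tab_count beta gamma T 1).-1.
Hypothesis one_box : forall i, 0 < i -> conjpart beta i - conjpart gamma i <= 1.
Hypothesis twos_below_ones : forall i j, 0 < row_count beta gamma T 2 j ->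
  0 < row_count beta gamma T 1 i -> i < j.

Lemma in_DGamma_touches_le1 D i : P D -> 0 < i -> count (touches i) (enum_mset D) <= 1.
Proof. by move=> [[_ _ _ tD] _] i0; rewrite tD // one_box. Qed.

Lemma in_DGamma_pole_le1 D : P D -> count is_pole (enum_mset D) <= 1.
Proof.
move=> [[_ _ -> _] _]; have [_ _ [<- <-] _] := LR.
by case: twos_vs_ones => ->; lia.
Qed.

(* A target row holds no [2] (it would be the source of a second member touching
   it), so its single box holds a [1]. *)
Lemma in_DGamma_target_row D m : P D -> m \in enum_mset D ->
  0 < row_count beta gamma T 1 m.2.
Proof.
move=> PD mD; have [[_ _ _ tD] sD] := PD; set t := m.2.
have /andP [t0 mwf] := in_DGamma_wf_arc PD mD.
have no2 : row_count beta gamma T 2 t = 0.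
  rewrite -sD //; apply/eqP; rewrite -leqn0 leqNgt -has_count.
  apply/hasPn => m' m'D; apply/negP => /eqP m't.
  have nm : m' != m by apply/eqP => em; move: mwf; rewrite -em m't /t em ltnn.
  have := count_gt1 (p := touches t) nm m'D mD.
  rewrite /touches m't /t !eqxx orbT => /(_ isT isT).
  by rewrite ltnNge (in_DGamma_touches_le1 PD t0).
have box : inskew beta gamma t (conjpart beta t).
  rewrite /inskew t0 leqnn andbT -subn_gt0 -tD // -has_count.
  by apply/hasP; exists m; rewrite // /touches eqxx orbT.
have cb : conjpart beta t < bnd beta.
  rewrite /bnd ltnS; apply: leq_trans (count_size _ _) (size_le_sumn _).
  by case/andP: beta_partition.
have [_ entries _ _] := LR.
case: (entries t _ box) => Tc; first exact: row_count_gt0 cb box Tc.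
by have := row_count_gt0 cb box Tc; rewrite no2.
Qed.

Lemma in_DGamma_src_gt_target D m m' : P D -> m \in enum_mset D -> m' \in enum_mset D ->
  src_gt m.1 (Some m'.2).
Proof.
move=> PD mD m'D; case Em: m.1 => [s|] //=.
have /andP [t0 ts] := in_DGamma_wf_arc PD mD; rewrite Em in ts.
apply: twos_below_ones (in_DGamma_target_row PD m'D).
rewrite -PD.2 ?(leq_ltn_trans _ ts) // -has_count.
by apply/hasP; exists m; rewrite //= Em.
Qed.

End LRConditions.

End DGamma.

Theorem mainTheorem7 (alpha beta gamma : seq nat) (T : nat -> nat -> nat) :
  is_partition alpha -> is_partition beta -> is_partition gamma ->
  part alpha 1 <= 2 ->
  is_LR_tableau alpha beta gamma T ->
  (tab_count beta gamma T 2 = tab_count beta gamma T 1 \/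
   tab_count beta gamma T 2 = (tab_count beta gamma T 1).-1) ->
  (forall i, 0 < i -> conjpart beta i - conjpart gamma i <= 1) ->
  (forall i j, 0 < row_count beta gamma T 2 j -> 0 < row_count beta gamma T 1 i ->
      i < j) ->
  forall C1 C2 : seq diagram,
    saturated_chain (in_DGamma alpha beta gamma T) C1 ->
    saturated_chain (in_DGamma alpha beta gamma T) C2 ->
    chain_length C1 = chain_length C2.
Proof.
move=> _ beta_partition _ _ LR twos_vs_ones one_box twos_below_ones.
apply: saturated_chains_length.
- exact: in_DGamma_swap_move.
- exact: in_DGamma_src_sum.
- by move=> D m PD mD; case/andP: (in_DGamma_wf_arc PD mD).
- exact: in_DGamma_src_gt_target.
- exact: in_DGamma_touches_le1.
- exact: in_DGamma_pole_le1.
- exact: in_DGamma_size.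
Qed.
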